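(* Let $(\mathcal{C},\boxtimes,J)$ be a partially monoidal category whose tensor product partial functor $\mathcal{C}\times\mathcal{C}\xleftarrow{i}\mathcal{S}\xrightarrow{\boxtimes}\mathcal{C}$ has left leg $i$ a cosieve. Then $\mathcal{C}$ is a promonoidal category with representable unit presheaf and with a tensor profunctor $\otimes$ such that for each $(b,c)\in\mathcal{C}\times\mathcal{C}$ the presheaf $\otimes(-,b,c)$ is either representable or empty (namely $\otimes(-,b,c)=\mathcal{C}(-,b\boxtimes c)$ if $(b,c)\in\mathcal{S}$, $\otimes(-,b,c)=\varnothing$ otherwise, and unit $\mathcal{C}(-,J)$).
   Context: A partial functor $\mathcal{C}\rightharpoonup\mathcal{D}$ is a span of functors $\mathcal{C}\xleftarrow{i}\mathcal{S}\xrightarrow{F}\mathcal{D}$ where $i$ is a full and faithful opisofibration embedding $\mathcal{S}$ as a replete subcategory of $\mathcal{C}$; partial functors compose by pullback, and a morphism $(i,F)\to(j,G)$ of partial functors is a functor $\phi$ between the apexes with $j\phi=i$ and a natural transformation $F\Rightarrow G\phi$. These form a monoidal bicategory $\mathsf{PCat}$ (tensor: product of categories and of the underlying spans). A partially monoidal category is a category $\mathcal{C}$ with a partial functor $\boxtimes:\mathcal{C}\times\mathcal{C}\rightharpoonup\mathcal{C}$, a unit object $J$ (a functor $1\to\mathcal{C}$), and associativity and unit natural isomorphisms (2-cells in $\mathsf{PCat}$) satisfying the triangle and pentagon equations, i.e. a pseudomonoid in $\mathsf{PCat}$. The left leg $i:\mathcal{S}\to\mathcal{C}\times\mathcal{C}$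 is a cosieve if it is a discrete opfibration embedding $\mathcal{S}$ as a full subcategory closed under postcomposition: whenever $(b,c)\in\mathcal{S}$ and $(b,c)\to(b',c')$ is a morphism of $\mathcal{C}\times\mathcal{C}$, then $(b',c')\in\mathcal{S}$. A profunctor $P:\mathcal{A}\,{-\!\!\!\mapsto}\,\mathcal{B}$ is a functor $\mathcal{B}^{op}\times\mathcal{A}\to\mathsf{Set}$; profunctors compose by coend $(Q\circ P)(e,c)=\int^d Q(e,d)\times P(d,c)$. A promonoidal category is a category $\mathcal{C}$ with a profunctor $\otimes:\mathcal{C}\times\mathcal{C}\,{-\!\!\!\mapsto}\,\mathcal{C}$ (written $\otimes(a,b,c)$ with $a$ contravariant) and a presheaf $I:\mathcal{C}^{op}\to\mathsf{Set}$, with natural isomorphisms $\otimes\circ(\otimes\times 1)\cong\otimes\circ(1\times\otimes)$, $\otimes\circ(1\times I)\cong 1\cong\otimes\circ(I\times 1)$ satisfying pentagon and triangle equations (a pseudomonoid in the bicategory of profunctors). *)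

From Stdlib Require Import Relations.
Set Implicit Arguments.
Unset Strict Implicit.

(* Categories (morphism equality is Leibniz; composition diagrammatic) *)
Record Category := {
  Ob :> Type;
  Hom : Ob -> Ob -> Type;
  idm : forall a, Hom a a;
  comp : forall a b c, Hom a b -> Hom b c -> Hom a c;
  comp_id_l : forall a b (f : Hom a b), comp (idm a) f = f;
  comp_id_r : forall a b (f : Hom a b), comp f (idm b) = f;
  comp_assoc : forall a b c d (f : Hom a b) (g : Hom b c) (h : Hom c d),
      comp (comp f g) h = comp f (comp g h)
}.
Arguments Hom {C} : rename.
Arguments idm {C} a : rename.
Arguments comp {C} {a b c} : rename.
(* f ;; g  is "first f, then g", i.e. g o f *)
Notation "f ;; g" := (comp f g) (at level 40, left associativity).

(* Partially monoidal categories (pseudomonoids in PCat), unfolded.    *)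
(* The tensor partial functor C x C <- S -> C has as left leg the      *)
(* inclusion of the full replete subcategory S of C x C on the pairs   *)
(* satisfying Sdom; the tensor is a functor on that full subcategory.  *)
Unset Implicit Arguments.
Record PartMonCat (C : Category) := {
  Sdom : C -> C -> Prop;
  tensO : forall a b : C, Sdom a b -> C;
  tensM : forall (a b a' b' : C) (p : Sdom a b) (p' : Sdom a' b'),
      Hom a a' -> Hom b b' -> Hom (tensO _ _ p) (tensO _ _ p');
  tensM_id : forall (a b : C) (p : Sdom a b),
      tensM _ _ _ _ p p (idm a) (idm b) = idm _;
  tensM_comp : forall (a b a' b' a'' b'' : C) (p : Sdom a b) (p' : Sdom a' b')
      (p'' : Sdom a'' b'') (f : Hom a a') (g : Hom b b') (f' : Hom a' a'')
      (g' : Hom b' b''),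
      tensM _ _ _ _ p p'' (f ;; f') (g ;; g')
      = tensM _ _ _ _ p p' f g ;; tensM _ _ _ _ p' p'' f' g';
  unitO : C;
  (* associator: invertible 2-cell  box o (box x 1) => box o (1 x box)  *)
  (* its domain part: the two composite partial functors have the same  *)
  (* domain of definition in C x C x C                                  *)
  assoc_dom_lr : forall (a b c : C) (p : Sdom a b),
      Sdom (tensO _ _ p) c -> exists q : Sdom b c, Sdom a (tensO _ _ q);
  assoc_dom_rl : forall (a b c : C) (q : Sdom b c),
      Sdom a (tensO _ _ q) -> exists p : Sdom a b, Sdom (tensO _ _ p) c;
  assoc : forall (a b c : C) (p : Sdom a b) (p1 : Sdom (tensO _ _ p) c)
      (q : Sdom b c) (q1 : Sdom a (tensO _ _ q)),
      Hom (tensO _ _ p1) (tensO _ _ q1);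
  assoc_inv : forall (a b c : C) (p : Sdom a b) (p1 : Sdom (tensO _ _ p) c)
      (q : Sdom b c) (q1 : Sdom a (tensO _ _ q)),
      Hom (tensO _ _ q1) (tensO _ _ p1);
  assoc_inv_l : forall a b c p p1 q q1,
      assoc a b c p p1 q q1 ;; assoc_inv a b c p p1 q q1 = idm _;
  assoc_inv_r : forall a b c p p1 q q1,
      assoc_inv a b c p p1 q q1 ;; assoc a b c p p1 q q1 = idm _;
  assoc_nat : forall (a b c a' b' c' : C) (f : Hom a a') (g : Hom b b')
      (h : Hom c c') p p1 q q1 p' p1' q' q1',
      assoc a b c p p1 q q1 ;; tensM _ _ _ _ q1 q1' f (tensM _ _ _ _ q q' g h)
      = tensM _ _ _ _ p1 p1' (tensM _ _ _ _ p p' f g) h ;; assoc a' b' c' p' p1' q' q1';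
  (* unitors: invertible 2-cells  box o (J x 1) => 1,  box o (1 x J) => 1; *)
  (* domain part: the composites are defined everywhere                    *)
  lunit_dom : forall a : C, Sdom unitO a;
  runit_dom : forall a : C, Sdom a unitO;
  lunit : forall (a : C) (p : Sdom unitO a), Hom (tensO _ _ p) a;
  lunit_inv : forall (a : C) (p : Sdom unitO a), Hom a (tensO _ _ p);
  lunit_inv_l : forall a p, lunit a p ;; lunit_inv a p = idm _;
  lunit_inv_r : forall a p, lunit_inv a p ;; lunit a p = idm _;
  lunit_nat : forall (a a' : C) (f : Hom a a') p p',
      tensM _ _ _ _ p p' (idm unitO) f ;; lunit a' p' = lunit a p ;; f;
  runit : forall (a : C) (p : Sdom a unitO), Hom (tensO _ _ p) a;
  runit_inv : forall (a : C) (p : Sdom a unitO), Hom a (tensO _ _ p);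
  runit_inv_l : forall a p, runit a p ;; runit_inv a p = idm _;
  runit_inv_r : forall a p, runit_inv a p ;; runit a p = idm _;
  runit_nat : forall (a a' : C) (f : Hom a a') p p',
      tensM _ _ _ _ p p' f (idm unitO) ;; runit a' p' = runit a p ;; f;
  triangle : forall (a b : C) (p : Sdom a unitO) (p1 : Sdom (tensO _ _ p) b)
      (q : Sdom unitO b) (q1 : Sdom a (tensO _ _ q)) (r : Sdom a b),
      assoc a unitO b p p1 q q1 ;; tensM _ _ _ _ q1 r (idm a) (lunit b q)
      = tensM _ _ _ _ p1 r (runit a p) (idm b);
  pentagon : forall (a b c d : C)
      (ab : Sdom a b) (ab_c : Sdom (tensO _ _ ab) c)
      (abc_d : Sdom (tensO _ _ ab_c) d)
      (bc : Sdom b c) (a_bc : Sdom a (tensO _ _ bc))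
      (abc'_d : Sdom (tensO _ _ a_bc) d)
      (bc_d : Sdom (tensO _ _ bc) d) (a_bcd : Sdom a (tensO _ _ bc_d))
      (cd : Sdom c d) (b_cd : Sdom b (tensO _ _ cd))
      (a_bcd' : Sdom a (tensO _ _ b_cd))
      (ab_cd : Sdom (tensO _ _ ab) (tensO _ _ cd)),
      tensM _ _ _ _ abc_d abc'_d (assoc a b c ab ab_c bc a_bc) (idm d)
      ;; assoc a _ d a_bc abc'_d bc_d a_bcd
      ;; tensM _ _ _ _ a_bcd a_bcd' (idm a) (assoc b c d bc bc_d cd b_cd)
      = assoc _ c d ab_c abc_d cd ab_cd ;; assoc a b _ ab ab_cd b_cd a_bcd'
}.
Set Implicit Arguments.
Arguments Sdom {C} M : rename.
Arguments tensO {C} M {a b} : rename.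
Arguments tensM {C} M {a b a' b'} p p' : rename.
Arguments unitO {C} M : rename.

Definition IsCosieve (C : Category) (M : PartMonCat C) : Prop :=
  forall (a b a' b' : C), Sdom M a b -> Hom a a' -> Hom b b' -> Sdom M a' b'.

(* Coends of Type-valued functors, as setoids (carrier + the           *)
(* equivalence relation generated by the wedge relation).              *)
Section Coends.
Variable C : Category.

(* \int^x F x * G x, F contravariant, G covariant *)
Definition coend1 (F G : C -> Type) : Type := {x : C & (F x * G x)%type}.

Inductive coend1_step (F G : C -> Type)
    (Fm : forall x x' : C, Hom x x' -> F x' -> F x)
    (Gm : forall x x' : C, Hom x x' -> G x -> G x')
  : coend1 F G -> coend1 F G -> Prop :=
| c1step (x x' : C) (f : Hom x x') (s : F x') (t : G x) :
    coend1_step Fm Gm (existT _ x' (s, Gm _ _ f t)) (existT _ x (Fm _ _ f s, t)).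

Definition coend1_eq F G Fm Gm : relation (coend1 F G) :=
  clos_refl_sym_trans _ (@coend1_step F G Fm Gm).

(* \int^(x,y) A x * B x y * D y over C x C, A contravariant,
   B covariant in x and contravariant in y, D covariant *)
Definition coend2 (A : C -> Type) (B : C -> C -> Type) (D : C -> Type) : Type :=
  {x : C & {y : C & (A x * B x y * D y)%type}}.

Inductive coend2_step (A : C -> Type) (B : C -> C -> Type) (D : C -> Type)
    (Am : forall x x' : C, Hom x x' -> A x' -> A x)
    (Bm : forall x x' y y' : C, Hom x x' -> Hom y y' -> B x y' -> B x' y)
    (Dm : forall y y' : C, Hom y y' -> D y -> D y')
  : coend2 A B D -> coend2 A B D -> Prop :=
| c2step (x x' y y' : C) (f : Hom x x') (g : Hom y y') (s : A x') (t : B x y')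
    (u : D y) :
    coend2_step Am Bm Dm
      (existT _ x' (existT _ y' (s, Bm _ _ _ _ f (idm y') t, Dm _ _ g u)))
      (existT _ x (existT _ y (Am _ _ f s, Bm _ _ _ _ (idm x) g t, u))).

Definition coend2_eq A B D Am Bm Dm : relation (coend2 A B D) :=
  clos_refl_sym_trans _ (@coend2_step A B D Am Bm Dm).
End Coends.

(* Promonoidal categories (Day), i.e. pseudomonoids in Prof, unfolded. *)
(* T a b c = (x)(a,b,c), contravariant in a, covariant in b, c.        *)
(* Coend factors  C(c',c)  coming from identity profunctors are        *)
(* eliminated by the (co)Yoneda lemma, as in Day's definition.         *)
Section Promonoidal.
Variable C : Category.
Variable T : C -> C -> C -> Type.
Variable ta : forall a a' b b' c c' : C,
    Hom a' a -> Hom b b' -> Hom c c' -> T a b c -> T a' b' c'.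
Variable U : C -> Type.
Variable ua : forall a a' : C, Hom a' a -> U a -> U a'.

(* (x o (x x 1))(d; a, b, c) = \int^x T x a b * T d x c *)
Definition Lcar (d a b c : C) := coend1 (fun x => T x a b) (fun x => T d x c).
Definition Leq (d a b c : C) : relation (Lcar d a b c) :=
  @coend1_eq C (fun x => T x a b) (fun x => T d x c)
    (fun x x' f s => ta f (idm a) (idm b) s)
    (fun x x' f t => ta (idm d) f (idm c) t).
(* (x o (1 x x))(d; a, b, c) = \int^y T y b c * T d a y *)
Definition Rcar (d a b c : C) := coend1 (fun y => T y b c) (fun y => T d a y).
Definition Req (d a b c : C) : relation (Rcar d a b c) :=
  @coend1_eq C (fun y => T y b c) (fun y => T d a y)
    (fun y y' f s => ta f (idm b) (idm c) s)
    (fun y y' f t => ta (idm d) (idm a) f t).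
Definition Lact (d d' a a' b b' c c' : C) (fd : Hom d' d) (fa : Hom a a')
    (fb : Hom b b') (fc : Hom c c') (r : Lcar d a b c) : Lcar d' a' b' c' :=
  existT _ (projT1 r) (ta (idm _) fa fb (fst (projT2 r)),
                       ta fd (idm _) fc (snd (projT2 r))).
Definition Ract (d d' a a' b b' c c' : C) (fd : Hom d' d) (fa : Hom a a')
    (fb : Hom b b') (fc : Hom c c') (r : Rcar d a b c) : Rcar d' a' b' c' :=
  existT _ (projT1 r) (ta (idm _) fb fc (fst (projT2 r)),
                       ta fd fa (idm _) (snd (projT2 r))).

(* (x o (I x 1))(a; b) = \int^x U x * T a x b *)
Definition LUcar (a b : C) := coend1 U (fun x => T a x b).
Definition LUeq (a b : C) : relation (LUcar a b) :=
  @coend1_eq C U (fun x => T a x b) (fun x x' f u => ua f u) (fun x x' f t => ta (idm a) f (idm b) t).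
Definition LUact (a a' b b' : C) (fa : Hom a' a) (fb : Hom b b') (r : LUcar a b)
  : LUcar a' b' :=
  existT _ (projT1 r) (fst (projT2 r), ta fa (idm _) fb (snd (projT2 r))).
(* (x o (1 x I))(a; b) = \int^x U x * T a b x *)
Definition RUcar (a b : C) := coend1 U (fun x => T a b x).
Definition RUeq (a b : C) : relation (RUcar a b) :=
  @coend1_eq C U (fun x => T a b x) (fun x x' f u => ua f u) (fun x x' f t => ta (idm a) (idm b) f t).
Definition RUact (a a' b b' : C) (fa : Hom a' a) (fb : Hom b b') (r : RUcar a b)
  : RUcar a' b' :=
  existT _ (projT1 r) (fst (projT2 r), ta fa fb (idm _) (snd (projT2 r))).

(* target of the pentagon:  \int^(x,y) T x c d * T y b x * T e a y *)
Definition PTeq (e a b c d : C) :=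
  @coend2_eq C (fun x => T x c d) (fun x y => T y b x) (fun y => T e a y)
    (fun x x' f s => ta f (idm c) (idm d) s)
    (fun x x' y y' f g t => ta g (idm b) f t)
    (fun y y' g u => ta (idm e) (idm a) g u).

Unset Implicit Arguments.
Record Promonoidal := {
  ta_id : forall (a b c : C) (t : T a b c), ta (idm a) (idm b) (idm c) t = t;
  ta_comp : forall (a a1 a2 b b1 b2 c c1 c2 : C) (f1 : Hom a1 a) (g1 : Hom b b1)
      (h1 : Hom c c1) (f2 : Hom a2 a1) (g2 : Hom b1 b2) (h2 : Hom c1 c2)
      (t : T a b c),
      ta f2 g2 h2 (ta f1 g1 h1 t) = ta (f2 ;; f1) (g1 ;; g2) (h1 ;; h2) t;
  ua_id : forall (a : C) (u : U a), ua (idm a) u = u;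
  ua_comp : forall (a a1 a2 : C) (f1 : Hom a1 a) (f2 : Hom a2 a1) (u : U a),
      ua f2 (ua f1 u) = ua (f2 ;; f1) u;
  alpha : forall d a b c : C, Lcar d a b c -> Rcar d a b c;
  alpha_inv : forall d a b c : C, Rcar d a b c -> Lcar d a b c;
  alpha_resp : forall d a b c r r', Leq r r' -> Req (alpha d a b c r) (alpha d a b c r');
  alpha_inv_resp : forall d a b c r r',
      Req r r' -> Leq (alpha_inv d a b c r) (alpha_inv d a b c r');
  alpha_inv_l : forall d a b c r, Leq (alpha_inv d a b c (alpha d a b c r)) r;
  alpha_inv_r : forall d a b c r, Req (alpha d a b c (alpha_inv d a b c r)) r;
  alpha_nat : forall (d d' a a' b b' c c' : C) (fd : Hom d' d) (fa : Hom a a')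
      (fb : Hom b b') (fc : Hom c c') (r : Lcar d a b c),
      Req (alpha _ _ _ _ (Lact fd fa fb fc r)) (Ract fd fa fb fc (alpha _ _ _ _ r));
  (* left unitor  x o (I x 1) ~= 1 = Hom *)
  lam : forall a b : C, LUcar a b -> Hom a b;
  lam_inv : forall a b : C, Hom a b -> LUcar a b;
  lam_resp : forall a b r r', LUeq r r' -> lam a b r = lam a b r';
  lam_inv_l : forall a b r, LUeq (lam_inv a b (lam a b r)) r;
  lam_inv_r : forall a b h, lam a b (lam_inv a b h) = h;
  lam_nat : forall (a a' b b' : C) (fa : Hom a' a) (fb : Hom b b') r,
      lam _ _ (LUact fa fb r) = fa ;; (lam a b r ;; fb);
  rho : forall a b : C, RUcar a b -> Hom a b;
  rho_inv : forall a b : C, Hom a b -> RUcar a b;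
  rho_resp : forall a b r r', RUeq r r' -> rho a b r = rho a b r';
  rho_inv_l : forall a b r, RUeq (rho_inv a b (rho a b r)) r;
  rho_inv_r : forall a b h, rho a b (rho_inv a b h) = h;
  rho_nat : forall (a a' b b' : C) (fa : Hom a' a) (fb : Hom b b') r,
      rho _ _ (RUact fa fb r) = fa ;; (rho a b r ;; fb);
  (* pentagon, on representatives of \int^(x,y) T x a b * T y x c * T e y d *)
  pentagon_pro : forall (e a b c d x y : C) (s : T x a b) (t : T y x c) (w : T e y d),
      let r1 := alpha y a b c (existT _ x (s, t)) in
      let r2 := alpha e a (projT1 r1) d (existT _ y (snd (projT2 r1), w)) in
      let r3 := alpha (projT1 r2) b c d (existT _ (projT1 r1) (fst (projT2 r1), fst (projT2 r2))) in
      let r4 := alpha e x c d (existT _ y (t, w)) in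
      let r5 := alpha e a b (projT1 r4) (existT _ x (s, snd (projT2 r4))) in
      PTeq (existT _ (projT1 r3) (existT _ (projT1 r2)
              (fst (projT2 r3), snd (projT2 r3), snd (projT2 r2))))
           (existT _ (projT1 r4) (existT _ (projT1 r5)
              (fst (projT2 r4), fst (projT2 r5), snd (projT2 r5))));
  (* triangle, on representatives of \int^(x,y) U y * T x a y * T e x b *)
  triangle_pro : forall (e a b x y : C) (u : U y) (t1 : T x a y) (t2 : T e x b),
      let r := alpha e a y b (existT _ x (t1, t2)) in
      ta (idm e) (idm a) (lam (projT1 r) b (existT _ y (u, fst (projT2 r))))
         (snd (projT2 r))
      = ta (idm e) (rho x a (existT _ y (u, t1))) (idm b) t2
}.
End Promonoidal.
Set Implicit Arguments.

(* The candidate promonoidal structure induced by a partially monoidal *)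
(* category whose tensor domain is a cosieve:                          *)
(*   (x)(a; b, c) = C(a, b [x] c) if (b, c) in S, empty otherwise       *)
Definition pmT (C : Category) (M : PartMonCat C) (a b c : C) : Type :=
  {p : Sdom M b c & Hom a (tensO M p)}.

Definition pmTact (C : Category) (M : PartMonCat C) (cos : IsCosieve M)
    (a a' b b' c c' : C) (f : Hom a' a) (g : Hom b b') (h : Hom c c')
    (t : pmT M a b c) : pmT M a' b' c' :=
  existT _ (cos _ _ _ _ (projT1 t) g h)
    (f ;; (projT2 t ;; tensM M (projT1 t) (cos _ _ _ _ (projT1 t) g h) g h)).

Definition pmU (C : Category) (M : PartMonCat C) (a : C) : Type := Hom a (unitO M).

Definition pmUact (C : Category) (M : PartMonCat C) (a a' : C) (f : Hom a' a)
    (u : pmU M a) : pmU M a' := f ;; u.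

(** By co-Yoneda, the coends in Day's axioms collapse: the tensor profunctor
    [pmT M a b c] is [C(a, b ⊠ c)] or empty, so [∫^x ⊗(x,a,b) × ⊗(d,x,c)] is
    [C(d, (a ⊠ b) ⊠ c)], the cosieve condition guaranteeing that [(a ⊠ b) ⊠ c] is
    defined as soon as some [x → a ⊠ b] has [x ⊠ c] defined; likewise for the other
    bracketing and for the unit coends, which become [C(a, J ⊠ b) ≅ C(a, b)].  The
    associator and unitors of [M] then become the promonoidal ones, and Day's pentagon
    and triangle reduce to those of [M]. *)
From Stdlib Require Import ProofIrrelevance Relations.

Lemma rst_invariant (A B : Type) (R : relation A) (f : A -> B) :
  (forall x y, R x y -> f x = f y) ->
  forall x y, clos_refl_sym_trans A R x y -> f x = f y.
Proof. intros Hstep x y Hxy; induction Hxy; eauto; congruence. Qed.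

Lemma coend1_step_of_eq {C : Category} {F G : C -> Type} {Fm Gm} {x x' : C} (f : Hom x x')
    (s : F x') (t : G x) (r r' : coend1 F G) :
  r = existT _ x' (s, Gm _ _ f t) -> r' = existT _ x (Fm _ _ f s, t) ->
  coend1_step Fm Gm r r'.
Proof. intros -> ->; constructor. Qed.

Lemma coend2_step_of_eq {C : Category} {A : C -> Type} {B : C -> C -> Type} {D : C -> Type}
    {Am Bm Dm} {x x' y y' : C} (f : Hom x x') (g : Hom y y') (s : A x') (t : B x y') (u : D y)
    (r r' : coend2 A B D) :
  r = existT _ x' (existT _ y' (s, Bm _ _ _ _ f (idm y') t, Dm _ _ g u)) ->
  r' = existT _ x (existT _ y (Am _ _ f s, Bm _ _ _ _ (idm x) g t, u)) ->
  coend2_step Am Bm Dm r r'.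
Proof. intros -> ->; constructor. Qed.

Lemma comp_tail {C : Category} {a b c z : C} {f : Hom a b} {g : Hom b c} {h : Hom a c} (k : Hom c z) :
  f ;; g = h -> f ;; (g ;; k) = h ;; k.
Proof. intros <-; rewrite comp_assoc; reflexivity. Qed.

Section PartiallyMonoidalFacts.
Variables (C : Category) (M : PartMonCat C).

Lemma tensM_merge {a b a' b' a'' b'' : C} (p : Sdom M a b) (p' : Sdom M a' b')
    (p'' : Sdom M a'' b'') f g f' g' :
  tensM M p p' f g ;; tensM M p' p'' f' g' = tensM M p p'' (f ;; f') (g ;; g').
Proof. symmetry; apply tensM_comp. Qed.

Lemma tensM_merge_tail {a b a' b' a'' b'' z : C} (p : Sdom M a b) (p' : Sdom M a' b')
    (p'' : Sdom M a'' b'') f g f' g' (h : Hom _ z) :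
  tensM M p p' f g ;; (tensM M p' p'' f' g' ;; h) = tensM M p p'' (f ;; f') (g ;; g') ;; h.
Proof. apply comp_tail, tensM_merge. Qed.

Lemma tensM_split_r {a b a' b' b'' : C} (p : Sdom M a b) (p' : Sdom M a' b')
    (p'' : Sdom M a' b'') f g g' :
  tensM M p p'' f (g ;; g') = tensM M p p' f g ;; tensM M p' p'' (idm a') g'.
Proof. rewrite <- tensM_comp, comp_id_r; reflexivity. Qed.

Lemma Sdom_assoc_lr_inner {a b c : C} (p : Sdom M a b) (p1 : Sdom M (tensO M p) c) :
  Sdom M b c.
Proof. destruct (assoc_dom_lr C M a b c p p1) as [q _]; exact q. Qed.

Lemma Sdom_assoc_lr_outer {a b c : C} (p : Sdom M a b) (p1 : Sdom M (tensO M p) c)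
    (q : Sdom M b c) : Sdom M a (tensO M q).
Proof.
  destruct (assoc_dom_lr C M a b c p p1) as [q' H].
  rewrite (proof_irrelevance _ q q'); exact H.
Qed.

Lemma Sdom_assoc_rl_inner {a b c : C} (q : Sdom M b c) (q1 : Sdom M a (tensO M q)) :
  Sdom M a b.
Proof. destruct (assoc_dom_rl C M a b c q q1) as [p _]; exact p. Qed.

Lemma Sdom_assoc_rl_outer {a b c : C} (q : Sdom M b c) (q1 : Sdom M a (tensO M q))
    (p : Sdom M a b) : Sdom M (tensO M p) c.
Proof.
  destruct (assoc_dom_rl C M a b c q q1) as [p' H].
  rewrite (proof_irrelevance _ p p'); exact H.
Qed.

End PartiallyMonoidalFacts.

Arguments Sdom_assoc_lr_inner {C M a b c}.
Arguments Sdom_assoc_lr_outer {C M a b c}.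
Arguments Sdom_assoc_rl_inner {C M a b c}.
Arguments Sdom_assoc_rl_outer {C M a b c}.

(* Proofs of [Sdom] are identified by proof irrelevance, so that terms whose types
   mention [tensO M p] for different proofs [p] of the same fact can be compared. *)
Ltac unify_Sdom_proofs :=
  repeat match goal with
  | |- context [?p] =>
      match type of p with
      | Sdom _ _ _ => tryif is_var p then fail else (generalize p; intro)
      end
  end;
  repeat match goal with
  | p : Sdom ?M ?a ?b, q : Sdom ?M ?a ?b |- _ =>
      tryif constr_eq p q then fail
      else (let E := fresh in pose proof (proof_irrelevance _ p q) as E; subst q)
  end.

Ltac simpl_comp :=
  repeat progress rewrite ?comp_assoc, ?tensM_id, ?comp_id_l, ?comp_id_r,
    ?tensM_merge, ?tensM_merge_tail, ?assoc_inv_l, ?assoc_inv_r, ?lunit_inv_l,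
    ?lunit_inv_r, ?runit_inv_l, ?runit_inv_r.

Ltac split_existT :=
  repeat match goal with
  | |- existT ?P ?a _ = existT ?P ?a _ => apply (f_equal (existT P a))
  | |- (_, _) = (_, _) => apply (f_equal2 pair)
  end.

Section PromonoidalOfPartiallyMonoidal.
Variables (C : Category) (M : PartMonCat C).
Hypothesis cos : IsCosieve M.

(* The pentagon of [M] precomposed with [(t ;; s ⊠ c) ⊠ d], using naturality of the
   associator to move [s] across. *)
Lemma pentagon_nat {a b c d x y : C} (ab : Sdom M a b) (xc : Sdom M x c) (yd : Sdom M y d)
    (s : Hom x (tensO M ab)) (t : Hom y (tensO M xc)) (bc : Sdom M b c) (cd : Sdom M c d)
    (ab_c : Sdom M (tensO M ab) c) (a_bc : Sdom M a (tensO M bc))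
    (bc_d : Sdom M (tensO M bc) d) (b_cd : Sdom M b (tensO M cd))
    (xc_d : Sdom M (tensO M xc) d) (x_cd : Sdom M x (tensO M cd))
    (ab_cd : Sdom M (tensO M ab) (tensO M cd)) (a_bc_d : Sdom M (tensO M a_bc) d)
    (a_bcd : Sdom M a (tensO M bc_d)) (a_bcd' : Sdom M a (tensO M b_cd)) :
  tensM M yd xc_d t (idm d)
  ;; (assoc C M x c d xc xc_d cd x_cd
  ;; (tensM M x_cd ab_cd s (idm (tensO M cd)) ;; assoc C M a b (tensO M cd) ab ab_cd b_cd a_bcd'))
  = tensM M yd a_bc_d (t ;; (tensM M xc ab_c s (idm c) ;; assoc C M a b c ab ab_c bc a_bc)) (idm d)
  ;; (assoc C M a (tensO M bc) d a_bc a_bc_d bc_d a_bcd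
  ;; tensM M a_bcd a_bcd' (idm a) (assoc C M b c d bc bc_d cd b_cd)).
Proof.
  pose (abc_d := Sdom_assoc_rl_outer cd ab_cd ab_c).
  assert (Hnat := assoc_nat C M _ _ _ _ _ _ s (idm c) (idm d) xc xc_d cd x_cd ab_c abc_d cd ab_cd).
  assert (Hpent := pentagon C M a b c d ab ab_c abc_d bc a_bc a_bc_d bc_d a_bcd cd b_cd a_bcd' ab_cd).
  rewrite tensM_id in Hnat; rewrite (comp_tail _ Hnat).
  simpl_comp; rewrite <- Hpent; simpl_comp; reflexivity.
Qed.

(* The triangle of [M] precomposed with [t ⊠ b], after naturality of the associator
   in the middle variable has turned [u : y → J] into [a ⊠ u]. *)
Lemma triangle_nat {a b x y : C} (ay : Sdom M a y) (xb : Sdom M x b) (u : Hom y (unitO M))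
    (t : Hom x (tensO M ay)) (ab : Sdom M a b) (yb : Sdom M y b) (aJ : Sdom M a (unitO M))
    (Jb : Sdom M (unitO M) b) (ay_b : Sdom M (tensO M ay) b) (a_yb : Sdom M a (tensO M yb)) :
  tensM M xb ay_b t (idm b)
  ;; (assoc C M a y b ay ay_b yb a_yb
  ;; tensM M a_yb ab (idm a) (tensM M yb Jb u (idm b) ;; lunit C M b Jb))
  = tensM M xb ab (t ;; (tensM M ay aJ (idm a) u ;; runit C M a aJ)) (idm b).
Proof.
  pose (a_Jb := cos _ _ _ _ a_yb (idm a) (tensM M yb Jb u (idm b))).
  pose (aJ_b := cos _ _ _ _ ay_b (tensM M ay aJ (idm a) u) (idm b)).
  rewrite (tensM_split_r C M a_yb a_Jb ab).
  rewrite (comp_tail _ (assoc_nat C M _ _ _ _ _ _ (idm a) u (idm b) ay ay_b yb a_yb aJ aJ_b Jb a_Jb)).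
  simpl_comp; rewrite triangle; simpl_comp; reflexivity.
Qed.

Lemma pmTact_id {a b c : C} (t : pmT M a b c) : pmTact cos (idm a) (idm b) (idm c) t = t.
Proof.
  destruct t as [p t]; unfold pmTact; simpl; unify_Sdom_proofs.
  simpl_comp; reflexivity.
Qed.

Lemma pmTact_comp {a a1 a2 b b1 b2 c c1 c2 : C} (f1 : Hom a1 a) (g1 : Hom b b1)
    (h1 : Hom c c1) (f2 : Hom a2 a1) (g2 : Hom b1 b2) (h2 : Hom c1 c2) (t : pmT M a b c) :
  pmTact cos f2 g2 h2 (pmTact cos f1 g1 h1 t) = pmTact cos (f2 ;; f1) (g1 ;; g2) (h1 ;; h2) t.
Proof.
  destruct t as [p t]; unfold pmTact; simpl; unify_Sdom_proofs.
  simpl_comp; reflexivity.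
Qed.

Lemma pmUact_id {a : C} (u : pmU M a) : pmUact (idm a) u = u.
Proof. apply comp_id_l. Qed.

Lemma pmUact_comp {a a1 a2 : C} (f1 : Hom a1 a) (f2 : Hom a2 a1) (u : pmU M a) :
  pmUact f2 (pmUact f1 u) = pmUact (f2 ;; f1) u.
Proof. symmetry; apply comp_assoc. Qed.

(* [HomL d a b c] is [C(d, (a ⊠ b) ⊠ c)] and [HomR d a b c] is [C(d, a ⊠ (b ⊠ c))],
   empty where the tensor is undefined; [Lcar_hom] and [Rcar_hom] are the co-Yoneda
   reductions of the two coends of Day's associativity axiom onto them. *)
Definition HomL (d a b c : C) : Type := {p : Sdom M a b & pmT M d (tensO M p) c}.
Definition HomR (d a b c : C) : Type := {q : Sdom M b c & pmT M d a (tensO M q)}.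

Definition Lcar_hom {d a b c : C} (r : Lcar (pmT M) d a b c) : HomL d a b c :=
  let s := fst (projT2 r) in
  existT _ (projT1 s) (pmTact cos (idm d) (projT2 s) (idm c) (snd (projT2 r))).

Definition Lcar_of_hom {d a b c : C} (h : HomL d a b c) : Lcar (pmT M) d a b c :=
  existT _ (tensO M (projT1 h)) (existT _ (projT1 h) (idm _), projT2 h).

Definition Rcar_hom {d a b c : C} (r : Rcar (pmT M) d a b c) : HomR d a b c :=
  let s := fst (projT2 r) in
  existT _ (projT1 s) (pmTact cos (idm d) (idm a) (projT2 s) (snd (projT2 r))).

Definition Rcar_of_hom {d a b c : C} (h : HomR d a b c) : Rcar (pmT M) d a b c :=
  existT _ (tensO M (projT1 h)) (existT _ (projT1 h) (idm _), projT2 h).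

Lemma Lcar_of_homK {d a b c : C} (h : HomL d a b c) : Lcar_hom (Lcar_of_hom h) = h.
Proof. destruct h as [p t]; unfold Lcar_hom; simpl; rewrite pmTact_id; reflexivity. Qed.

Lemma Rcar_of_homK {d a b c : C} (h : HomR d a b c) : Rcar_hom (Rcar_of_hom h) = h.
Proof. destruct h as [q t]; unfold Rcar_hom; simpl; rewrite pmTact_id; reflexivity. Qed.

Lemma Lcar_homK {d a b c : C} (r : Lcar (pmT M) d a b c) :
  Leq (pmTact cos) (Lcar_of_hom (Lcar_hom r)) r.
Proof.
  destruct r as [x [[p s] t]]; apply rst_step.
  apply (coend1_step_of_eq s (existT _ p (idm _)) t); [reflexivity|].
  unfold pmTact; simpl; unify_Sdom_proofs; simpl_comp; reflexivity.
Qed.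

Lemma Rcar_homK {d a b c : C} (r : Rcar (pmT M) d a b c) :
  Req (pmTact cos) (Rcar_of_hom (Rcar_hom r)) r.
Proof.
  destruct r as [y [[q s] t]]; apply rst_step.
  apply (coend1_step_of_eq s (existT _ q (idm _)) t); [reflexivity|].
  unfold pmTact; simpl; unify_Sdom_proofs; simpl_comp; reflexivity.
Qed.

Lemma Leq_hom {d a b c : C} (r r' : Lcar (pmT M) d a b c) :
  Leq (pmTact cos) r r' <-> Lcar_hom r = Lcar_hom r'.
Proof.
  split.
  - apply rst_invariant; intros ? ? [x x' f [p s] t].
    unfold Lcar_hom, pmTact; simpl; unify_Sdom_proofs; simpl_comp; reflexivity.
  - intros E; apply rst_trans with (Lcar_of_hom (Lcar_hom r)).
    + apply rst_sym, Lcar_homK.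
    + rewrite E; apply Lcar_homK.
Qed.

Lemma Req_hom {d a b c : C} (r r' : Rcar (pmT M) d a b c) :
  Req (pmTact cos) r r' <-> Rcar_hom r = Rcar_hom r'.
Proof.
  split.
  - apply rst_invariant; intros ? ? [y y' f [q s] t].
    unfold Rcar_hom, pmTact; simpl; unify_Sdom_proofs; simpl_comp; reflexivity.
  - intros E; apply rst_trans with (Rcar_of_hom (Rcar_hom r)).
    + apply rst_sym, Rcar_homK.
    + rewrite E; apply Rcar_homK.
Qed.

Definition assoc_hom {d a b c : C} (h : HomL d a b c) : HomR d a b c :=
  let p := projT1 h in
  let p1 := projT1 (projT2 h) in
  let q := Sdom_assoc_lr_inner p p1 in
  let q1 := Sdom_assoc_lr_outer p p1 q in
  existT _ q (existT _ q1 (projT2 (projT2 h) ;; assoc C M a b c p p1 q q1)).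

Definition assoc_inv_hom {d a b c : C} (h : HomR d a b c) : HomL d a b c :=
  let q := projT1 h in
  let q1 := projT1 (projT2 h) in
  let p := Sdom_assoc_rl_inner q q1 in
  let p1 := Sdom_assoc_rl_outer q q1 p in
  existT _ p (existT _ p1 (projT2 (projT2 h) ;; assoc_inv C M a b c p p1 q q1)).

Lemma assoc_homK {d a b c : C} (h : HomL d a b c) : assoc_inv_hom (assoc_hom h) = h.
Proof.
  destruct h as [p [p1 h]]; unfold assoc_hom, assoc_inv_hom; simpl; unify_Sdom_proofs.
  simpl_comp; reflexivity.
Qed.

Lemma assoc_inv_homK {d a b c : C} (h : HomR d a b c) : assoc_hom (assoc_inv_hom h) = h.
Proof.
  destruct h as [q [q1 h]]; unfold assoc_hom, assoc_inv_hom; simpl; unify_Sdom_proofs.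
  simpl_comp; reflexivity.
Qed.

Definition HomL_act {d d' a a' b b' c c' : C} (fd : Hom d' d) (fa : Hom a a') (fb : Hom b b')
    (fc : Hom c c') (h : HomL d a b c) : HomL d' a' b' c' :=
  let p' := cos _ _ _ _ (projT1 h) fa fb in
  existT _ p' (pmTact cos fd (tensM M (projT1 h) p' fa fb) fc (projT2 h)).

Definition HomR_act {d d' a a' b b' c c' : C} (fd : Hom d' d) (fa : Hom a a') (fb : Hom b b')
    (fc : Hom c c') (h : HomR d a b c) : HomR d' a' b' c' :=
  let q' := cos _ _ _ _ (projT1 h) fb fc in
  existT _ q' (pmTact cos fd fa (tensM M (projT1 h) q' fb fc) (projT2 h)).

Lemma assoc_hom_nat {d d' a a' b b' c c' : C} (fd : Hom d' d) (fa : Hom a a') (fb : Hom b b')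
    (fc : Hom c c') (h : HomL d a b c) :
  assoc_hom (HomL_act fd fa fb fc h) = HomR_act fd fa fb fc (assoc_hom h).
Proof.
  destruct h as [p [p1 h]]; unfold assoc_hom, HomL_act, HomR_act, pmTact; simpl.
  unify_Sdom_proofs; simpl_comp.
  erewrite assoc_nat; reflexivity.
Qed.

Lemma Lcar_hom_act {d d' a a' b b' c c' : C} (fd : Hom d' d) (fa : Hom a a') (fb : Hom b b')
    (fc : Hom c c') (r : Lcar (pmT M) d a b c) :
  Lcar_hom (Lact (pmTact cos) fd fa fb fc r) = HomL_act fd fa fb fc (Lcar_hom r).
Proof.
  destruct r as [x [[p s] t]]; unfold Lcar_hom, Lact, HomL_act, pmTact; simpl.
  unify_Sdom_proofs; simpl_comp; reflexivity.
Qed.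

Lemma Rcar_hom_act {d d' a a' b b' c c' : C} (fd : Hom d' d) (fa : Hom a a') (fb : Hom b b')
    (fc : Hom c c') (r : Rcar (pmT M) d a b c) :
  Rcar_hom (Ract (pmTact cos) fd fa fb fc r) = HomR_act fd fa fb fc (Rcar_hom r).
Proof.
  destruct r as [y [[q s] t]]; unfold Rcar_hom, Ract, HomR_act, pmTact; simpl.
  unify_Sdom_proofs; simpl_comp; reflexivity.
Qed.

Definition pm_alpha {d a b c : C} (r : Lcar (pmT M) d a b c) : Rcar (pmT M) d a b c :=
  Rcar_of_hom (assoc_hom (Lcar_hom r)).

Definition pm_alpha_inv {d a b c : C} (r : Rcar (pmT M) d a b c) : Lcar (pmT M) d a b c :=
  Lcar_of_hom (assoc_inv_hom (Rcar_hom r)).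

Lemma pm_alpha_resp {d a b c : C} (r r' : Lcar (pmT M) d a b c) :
  Leq (pmTact cos) r r' -> Req (pmTact cos) (pm_alpha r) (pm_alpha r').
Proof. intros E%Leq_hom; unfold pm_alpha; rewrite E; apply rst_refl. Qed.

Lemma pm_alpha_inv_resp {d a b c : C} (r r' : Rcar (pmT M) d a b c) :
  Req (pmTact cos) r r' -> Leq (pmTact cos) (pm_alpha_inv r) (pm_alpha_inv r').
Proof. intros E%Req_hom; unfold pm_alpha_inv; rewrite E; apply rst_refl. Qed.

Lemma pm_alphaK {d a b c : C} (r : Lcar (pmT M) d a b c) :
  Leq (pmTact cos) (pm_alpha_inv (pm_alpha r)) r.
Proof.
  unfold pm_alpha_inv, pm_alpha; rewrite Rcar_of_homK, assoc_homK; apply Lcar_homK.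
Qed.

Lemma pm_alpha_invK {d a b c : C} (r : Rcar (pmT M) d a b c) :
  Req (pmTact cos) (pm_alpha (pm_alpha_inv r)) r.
Proof.
  unfold pm_alpha_inv, pm_alpha; rewrite Lcar_of_homK, assoc_inv_homK; apply Rcar_homK.
Qed.

Lemma pm_alpha_nat {d d' a a' b b' c c' : C} (fd : Hom d' d) (fa : Hom a a') (fb : Hom b b')
    (fc : Hom c c') (r : Lcar (pmT M) d a b c) :
  Req (pmTact cos) (pm_alpha (Lact (pmTact cos) fd fa fb fc r))
    (Ract (pmTact cos) fd fa fb fc (pm_alpha r)).
Proof.
  apply Req_hom; unfold pm_alpha.
  rewrite Lcar_hom_act, Rcar_hom_act, !Rcar_of_homK, assoc_hom_nat; reflexivity.
Qed.

Definition pm_lam {a b : C} (r : LUcar (pmT M) (pmU M) a b) : Hom a b :=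
  let t := snd (projT2 r) in
  projT2 t ;; tensM M (projT1 t) (lunit_dom C M b) (fst (projT2 r)) (idm b)
  ;; lunit C M b (lunit_dom C M b).

Definition pm_lam_inv {a b : C} (h : Hom a b) : LUcar (pmT M) (pmU M) a b :=
  existT _ (unitO M)
    (idm (unitO M), existT _ (lunit_dom C M b) (h ;; lunit_inv C M b (lunit_dom C M b))).

Definition pm_rho {a b : C} (r : RUcar (pmT M) (pmU M) a b) : Hom a b :=
  let t := snd (projT2 r) in
  projT2 t ;; tensM M (projT1 t) (runit_dom C M b) (idm b) (fst (projT2 r))
  ;; runit C M b (runit_dom C M b).

Definition pm_rho_inv {a b : C} (h : Hom a b) : RUcar (pmT M) (pmU M) a b :=
  existT _ (unitO M)
    (idm (unitO M), existT _ (runit_dom C M b) (h ;; runit_inv C M b (runit_dom C M b))).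

Lemma pm_lam_resp {a b : C} (r r' : LUcar (pmT M) (pmU M) a b) :
  LUeq (pmTact cos) (@pmUact C M) r r' -> pm_lam r = pm_lam r'.
Proof.
  apply rst_invariant; intros ? ? [x x' f u [p t]].
  unfold pm_lam, pmTact, pmUact; simpl; unify_Sdom_proofs; simpl_comp; reflexivity.
Qed.

Lemma pm_lamK {a b : C} (r : LUcar (pmT M) (pmU M) a b) :
  LUeq (pmTact cos) (@pmUact C M) (pm_lam_inv (pm_lam r)) r.
Proof.
  destruct r as [x [u [p t]]]; apply rst_step.
  apply (coend1_step_of_eq u (idm (unitO M) : pmU M _) (existT _ p t)).
  - unfold pm_lam, pm_lam_inv, pmTact; simpl; unify_Sdom_proofs; simpl_comp; reflexivity.
  - unfold pmUact; simpl_comp; reflexivity.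
Qed.

Lemma pm_lam_invK {a b : C} (h : Hom a b) : pm_lam (pm_lam_inv h) = h.
Proof. unfold pm_lam, pm_lam_inv; simpl; simpl_comp; reflexivity. Qed.

Lemma pm_lam_nat {a a' b b' : C} (fa : Hom a' a) (fb : Hom b b')
    (r : LUcar (pmT M) (pmU M) a b) :
  pm_lam (LUact (pmTact cos) fa fb r) = fa ;; (pm_lam r ;; fb).
Proof.
  destruct r as [x [u [p t]]]; unfold pm_lam, LUact, pmTact; simpl; unify_Sdom_proofs.
  simpl_comp; erewrite <- lunit_nat; simpl_comp; reflexivity.
Qed.

Lemma pm_rho_resp {a b : C} (r r' : RUcar (pmT M) (pmU M) a b) :
  RUeq (pmTact cos) (@pmUact C M) r r' -> pm_rho r = pm_rho r'.
Proof.
  apply rst_invariant; intros ? ? [x x' f u [p t]].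
  unfold pm_rho, pmTact, pmUact; simpl; unify_Sdom_proofs; simpl_comp; reflexivity.
Qed.

Lemma pm_rhoK {a b : C} (r : RUcar (pmT M) (pmU M) a b) :
  RUeq (pmTact cos) (@pmUact C M) (pm_rho_inv (pm_rho r)) r.
Proof.
  destruct r as [x [u [p t]]]; apply rst_step.
  apply (coend1_step_of_eq u (idm (unitO M) : pmU M _) (existT _ p t)).
  - unfold pm_rho, pm_rho_inv, pmTact; simpl; unify_Sdom_proofs; simpl_comp; reflexivity.
  - unfold pmUact; simpl_comp; reflexivity.
Qed.

Lemma pm_rho_invK {a b : C} (h : Hom a b) : pm_rho (pm_rho_inv h) = h.
Proof. unfold pm_rho, pm_rho_inv; simpl; simpl_comp; reflexivity. Qed.

Lemma pm_rho_nat {a a' b b' : C} (fa : Hom a' a) (fb : Hom b b')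
    (r : RUcar (pmT M) (pmU M) a b) :
  pm_rho (RUact (pmTact cos) fa fb r) = fa ;; (pm_rho r ;; fb).
Proof.
  destruct r as [x [u [p t]]]; unfold pm_rho, RUact, pmTact; simpl; unify_Sdom_proofs.
  simpl_comp; erewrite <- runit_nat; simpl_comp; reflexivity.
Qed.

Lemma pm_pentagon (e a b c d x y : C) (s : pmT M x a b) (t : pmT M y x c) (w : pmT M e y d) :
  let r1 := pm_alpha (existT _ x (s, t)) in
  let r2 := pm_alpha (existT _ y (snd (projT2 r1), w)) in
  let r3 := pm_alpha (existT _ (projT1 r1) (fst (projT2 r1), fst (projT2 r2))) in
  let r4 := pm_alpha (existT _ y (t, w)) in
  let r5 := pm_alpha (existT _ x (s, snd (projT2 r4))) in
  PTeq (pmTact cos)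
    (existT _ (projT1 r3) (existT _ (projT1 r2) (fst (projT2 r3), snd (projT2 r3), snd (projT2 r2))))
    (existT _ (projT1 r4) (existT _ (projT1 r5) (fst (projT2 r4), fst (projT2 r5), snd (projT2 r5)))).
Proof.
  destruct s as [p s], t as [q t], w as [q1 w]; intros r1 r2 r3 r4 r5; subst r1 r2 r3 r4 r5.
  cbv beta iota zeta delta [pm_alpha Rcar_of_hom assoc_hom Lcar_hom pmTact projT1 projT2 fst snd].
  unify_Sdom_proofs; simpl_comp.
  (* One wedge step along the associator [(b ⊠ c) ⊠ d → b ⊠ (c ⊠ d)]. *)
  lazymatch goal with
  | |- PTeq _ (existT _ ?X (existT _ ?Y (?s0, existT _ _ ?g, ?u)))
              (existT _ _ (existT _ _ (_, ?t0, _))) =>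
      apply rst_sym, rst_step; apply (coend2_step_of_eq (idm X) g s0 t0 u)
  end.
  - unfold pmTact; simpl; unify_Sdom_proofs; split_existT; simpl_comp; try reflexivity.
    apply (f_equal (comp w)), pentagon_nat.
  - unfold pmTact; simpl; unify_Sdom_proofs; split_existT; simpl_comp; reflexivity.
Qed.

Lemma pm_triangle (e a b x y : C) (u : pmU M y) (t1 : pmT M x a y) (t2 : pmT M e x b) :
  let r := pm_alpha (existT _ x (t1, t2)) in
  pmTact cos (idm e) (idm a) (pm_lam (existT _ y (u, fst (projT2 r)))) (snd (projT2 r))
  = pmTact cos (idm e) (pm_rho (existT _ y (u, t1))) (idm b) t2.
Proof.
  destruct t1 as [p t1], t2 as [q t2]; intros r; subst r.
  cbv beta iota zeta delta [pm_alpha Rcar_of_hom assoc_hom Lcar_hom pm_lam pm_rho pmTact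
    projT1 projT2 fst snd].
  unify_Sdom_proofs; split_existT; simpl_comp.
  apply (f_equal (comp t2)), triangle_nat.
Qed.

End PromonoidalOfPartiallyMonoidal.

Theorem mainTheorem16 (C : Category) (M : PartMonCat C) (cos : IsCosieve M) :
  inhabited (@Promonoidal C (pmT M) (@pmTact C M cos) (pmU M) (@pmUact C M)).
Proof.
  constructor.
  exact {|
    ta_id := @pmTact_id C M cos; ta_comp := @pmTact_comp C M cos;
    ua_id := @pmUact_id C M; ua_comp := @pmUact_comp C M;
    alpha := @pm_alpha C M cos; alpha_inv := @pm_alpha_inv C M cos;
    alpha_resp := @pm_alpha_resp C M cos; alpha_inv_resp := @pm_alpha_inv_resp C M cos;
    alpha_inv_l := @pm_alphaK C M cos; alpha_inv_r := @pm_alpha_invK C M cos;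
    alpha_nat := @pm_alpha_nat C M cos;
    lam := @pm_lam C M; lam_inv := @pm_lam_inv C M;
    lam_resp := @pm_lam_resp C M cos; lam_inv_l := @pm_lamK C M cos;
    lam_inv_r := @pm_lam_invK C M; lam_nat := @pm_lam_nat C M cos;
    rho := @pm_rho C M; rho_inv := @pm_rho_inv C M;
    rho_resp := @pm_rho_resp C M cos; rho_inv_l := @pm_rhoK C M cos;
    rho_inv_r := @pm_rho_invK C M; rho_nat := @pm_rho_nat C M cos;
    pentagon_pro := @pm_pentagon C M cos; triangle_pro := @pm_triangle C M cos |}.
Qed.
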